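(* Let $L>0$. Then (i) $\Psi_2(x;L)\le \exp(x^2)-1$ for all $x\ge 0$; and (ii) $\Psi_2(x;L)\ge \Psi_1(x;L/3)$ for all $x\ge 0$.
   Context: For $x\ge 0$ let $h_1(x)=1+x-\sqrt{1+2x}$ and $h_2(x)=(1+x)\log(1+x)-x$. For $L>0$ define $\Psi_1(x;L)=\exp\big(\frac{2}{L^2}h_1(Lx)\big)-1$ (the Bernstein–Orlicz function) and $\Psi_2(x;L)=\exp\big(\frac{2}{L^2}h_2(Lx)\big)-1$ (the Bennett–Orlicz function), $x\ge 0$. *)

From Stdlib Require Import Reals.
Open Scope R_scope.

Definition h1 (x : R) : R := 1 + x - sqrt (1 + 2 * x).
Definition h2 (x : R) : R := (1 + x) * ln (1 + x) - x.

Definition Psi1 (x L : R) : R := exp (2 / L ^ 2 * h1 (L * x)) - 1.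
Definition Psi2 (x L : R) : R := exp (2 / L ^ 2 * h2 (L * x)) - 1.

From Stdlib Require Import Reals Lra Psatz.
From Coquelicot Require Import Coquelicot.
Open Scope R_scope.

(* Both Orlicz functions have the form exp (2 / L^2 * h (L x)) - 1, so each
   claim reduces to a pointwise bound on h: (i) h2 y <= y^2 / 2, and (ii)
   9 h1 (y / 3) <= h2 y, which is the claim for Psi1 (. ; L/3) after the change
   of scale.  Both differences vanish at 0 and are shown nondecreasing on
   [0, oo): for (i) the derivative is y - ln (1 + y) >= 0; for (ii) it is
   ln (1 + y) - 3 + 3 / sqrt (1 + 2y/3), which itself vanishes at 0 and has
   derivative 1 / (1 + y) - (1 + 2y/3)^(-3/2) >= 0 because
   (1 + y)^2 <= (1 + 2y/3)^3. *)

Lemma exp_le (a b : R) : a <= b -> exp a <= exp b.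
Proof. intros [Hab | ->]; [left; apply exp_increasing |]; lra. Qed.

Lemma le_of_derive_nonneg (f df : R -> R) (y : R) :
  (forall t, 0 <= t -> is_derive f t (df t)) ->
  (forall t, 0 <= t -> 0 <= df t) ->
  0 <= y -> f 0 <= f y.
Proof.
  intros Hder Hpos [Hy | <-]; [| lra].
  destruct (MVT_cor2 f df 0 y Hy) as [c [Hc Hcy]].
  - intros t Ht. apply is_derive_Reals, Hder. lra.
  - assert (0 <= df c) by (apply Hpos; lra). nra.
Qed.

Lemma ln_1_plus_le (y : R) : 0 <= y -> ln (1 + y) <= y.
Proof.
  intros Hy. rewrite <- (ln_exp y) at 2.
  apply ln_le; [lra | apply exp_ineq1_le].
Qed.

Lemma h2_le_half_sq (y : R) : 0 <= y -> h2 y <= y ^ 2 / 2.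
Proof.
  intros Hy.
  enough (0 ^ 2 / 2 - h2 0 <= y ^ 2 / 2 - h2 y) by
    (unfold h2 in *; rewrite Rplus_0_r, ln_1 in *; lra).
  apply (le_of_derive_nonneg (fun t => t ^ 2 / 2 - h2 t) (fun t => t - ln (1 + t)));
    [| | exact Hy].
  - intros t Ht. unfold h2. auto_derive; [lra |]. field. lra.
  - intros t Ht. pose proof (ln_1_plus_le t Ht). lra.
Qed.

Lemma one_plus_le_pow_three_halves (y : R) :
  0 <= y -> 1 + y <= (1 + 2 * y / 3) * sqrt (1 + 2 * y / 3).
Proof.
  intros Hy. set (t := 1 + 2 * y / 3).
  assert (Ht : 0 <= t) by (unfold t; lra).
  pose proof (sqrt_sqrt t Ht). pose proof (sqrt_pos t).
  apply Rsqr_incr_0_var; [| nra].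
  (* (1 + 2y/3)^3 - (1 + y)^2 = y^2/3 + 8 y^3/27 *)
  replace ((t * sqrt t)²) with (t * t * t) by (unfold Rsqr; nra).
  unfold Rsqr, t. nra.
Qed.

Lemma ln_1_plus_ge_inv_sqrt (y : R) :
  0 <= y -> 3 - 3 / sqrt (1 + 2 * y / 3) <= ln (1 + y).
Proof.
  intros Hy.
  set (g t := ln (1 + t) - 3 + 3 / sqrt (1 + 2 * t / 3)).
  enough (g 0 <= g y) by
    (unfold g in *; rewrite Rplus_0_r, ln_1, Rmult_0_r, Rdiv_0_l, Rplus_0_r,
       sqrt_1 in *; lra).
  apply (le_of_derive_nonneg g
           (fun t => / (1 + t) - / ((1 + 2 * t / 3) * sqrt (1 + 2 * t / 3))));
    [| | exact Hy]; intros t Ht;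
    assert (0 < sqrt (1 + 2 * t / 3)) by (apply sqrt_lt_R0; lra).
  - assert (sq : sqrt (1 + 2 * t / 3) * sqrt (1 + 2 * t / 3) = 1 + 2 * t / 3)
      by (apply sqrt_sqrt; lra).
    unfold g. auto_derive; [repeat split; lra |].
    unfold Rdiv in *. set (r := sqrt _) in *.
    rewrite <- sq. field. lra.
  - pose proof (one_plus_le_pow_three_halves t Ht).
    enough (/ ((1 + 2 * t / 3) * sqrt (1 + 2 * t / 3)) <= / (1 + t)) by lra.
    apply Rinv_le_contravar; lra.
Qed.

Lemma h1_third_le_h2 (y : R) : 0 <= y -> 9 * h1 (y / 3) <= h2 y.
Proof.
  intros Hy.
  enough (h2 0 - 9 * h1 (0 / 3) <= h2 y - 9 * h1 (y / 3)) by
    (unfold h1, h2 in *;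
     rewrite Rdiv_0_l, Rmult_0_r, !Rplus_0_r, ln_1, sqrt_1 in *; lra).
  apply (le_of_derive_nonneg (fun t => h2 t - 9 * h1 (t / 3))
           (fun t => ln (1 + t) - 3 + 3 / sqrt (1 + 2 * t / 3)));
    [| | exact Hy]; intros t Ht.
  - assert (0 < sqrt (1 + 2 * t / 3)) by (apply sqrt_lt_R0; lra).
    unfold h1, h2. auto_derive; [repeat split; lra |].
    replace (1 + 2 * (t * / 3)) with (1 + 2 * t / 3) by field.
    field. lra.
  - pose proof (ln_1_plus_ge_inv_sqrt t Ht). lra.
Qed.

Lemma Psi2_le_exp_sq (x L : R) :
  0 < L -> 0 <= x -> Psi2 x L <= exp (x ^ 2) - 1.
Proof.
  intros HL Hx. unfold Psi2.
  enough (E : 2 / L ^ 2 * h2 (L * x) <= x ^ 2) by (pose proof (exp_le _ _ E); lra).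
  replace (x ^ 2) with (2 / L ^ 2 * ((L * x) ^ 2 / 2)) by (field; lra).
  apply Rmult_le_compat_l.
  - apply Rlt_le, Rdiv_lt_0_compat; [lra | apply pow_lt, HL].
  - apply h2_le_half_sq. nra.
Qed.

Lemma Psi1_third_le_Psi2 (x L : R) :
  0 < L -> 0 <= x -> Psi1 x (L / 3) <= Psi2 x L.
Proof.
  intros HL Hx. unfold Psi1, Psi2.
  enough (E : 2 / (L / 3) ^ 2 * h1 (L / 3 * x) <= 2 / L ^ 2 * h2 (L * x))
    by (pose proof (exp_le _ _ E); lra).
  replace (L / 3 * x) with (L * x / 3) by field.
  replace (2 / (L / 3) ^ 2) with (2 / L ^ 2 * 9) by (field; lra).
  rewrite Rmult_assoc.
  apply Rmult_le_compat_l.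
  - apply Rlt_le, Rdiv_lt_0_compat; [lra | apply pow_lt, HL].
  - apply h1_third_le_h2. nra.
Qed.

Theorem proposition3 (L : R) (HL : 0 < L) :
  (forall x : R, 0 <= x -> Psi2 x L <= exp (x ^ 2) - 1) /\
  (forall x : R, 0 <= x -> Psi2 x L >= Psi1 x (L / 3)).
Proof.
  split; intros x Hx.
  - exact (Psi2_le_exp_sq x L HL Hx).
  - apply Rle_ge, Psi1_third_le_Psi2; assumption.
Qed.
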